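(* Let $k\ge 1$ be an integer. A fair coin is flipped independently until $\mathrm{H}^k\mathrm{T}$ ($k$ heads followed by a tails) first appears as consecutive flips; let $Y$ be the number of flips. Then for every $n\ge 1$, \[ E(Y^n) = 2^{k+1} b_n + \sum_{j=1}^{n-1} \binom{n}{j} E(Y^j) \sum_{i=1}^k i^{n-j}\, 2^{k-i}. \]
   Context: $b_n$ denotes the ordered Bell (Fubini) number $b_n=\sum_{i=0}^\infty \frac{i^n}{2^{i+1}}$ (with $0^0=1$), equivalently $b_n=\sum_{i=0}^n e_{n,i}2^{n-i}$ where $e_{n,i}$ are the Eulerian numbers ($e_{0,0}=1$, $e_{n,i}=0$ for $i\le0$ unless $n=i=0$ or for $i>n$, and $e_{n,i}=i e_{n-1,i}+(n-i+1)e_{n-1,i-1}$ otherwise); $b_0,b_1,b_2,\dots=1,1,3,13,75,\dots$. *)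

From Stdlib Require Import Reals.
From Coquelicot Require Import Coquelicot.
From mathcomp Require Import all_boot.
Local Open Scope nat_scope.

Set Implicit Arguments.
Unset Strict Implicit.
Unset Printing Implicit Defensive.

(* Coin flips: true = heads (H), false = tails (T). *)

Definition pattern (k : nat) : seq bool := rcons (nseq k true) false.

Definition ends_with_pattern (k : nat) (s : seq bool) (j : nat) : bool :=
  (k < j) && (drop (j - k.+1) (take j s) == pattern k).

Definition first_at (k m : nat) (s : m.-tuple bool) : bool :=
  ends_with_pattern k s m && [forall j : 'I_m, ~~ ends_with_pattern k s j].

(* P(Y = m) for a fair coin: each length-m flip sequence has probability 2^-m. *)
Definition probY (k m : nat) : R :=
  Rdiv (INR #|[set s : m.-tuple bool | first_at k s]|) (pow 2 m).

Definition momentY (k n : nat) : R :=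
  Series (fun m : nat => Rmult (pow (INR m) n) (probY k m)).

Fixpoint eulerian (n i : nat) : nat :=
  match n with
  | 0 => if i == 0 then 1 else 0
  | n'.+1 => match i with
             | 0 => 0
             | i'.+1 => i * eulerian n' i + (n - i + 1) * eulerian n' i'
             end
  end.

(* Ordered Bell (Fubini) numbers b_n = sum_{i=0}^n e_{n,i} 2^{n-i}. *)
Definition fubini (n : nat) : nat := \sum_(0 <= i < n.+1) eulerian n i * 2 ^ (n - i).

From Stdlib Require Import Reals Lra.
From Coquelicot Require Import Coquelicot.
From HB Require Import structures.
From mathcomp Require Import all_boot zify.

Set Implicit Arguments.
Unset Strict Implicit.
Unset Printing Implicit Defensive.

(* Conditioning on the first flips: a sequence in which H^k T first
   ends at flip m either starts with H^(i-1) T for some i <= k, after which the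
   search restarts, or is H^(m-1) T with m > k.  Hence
     P(Y = m) = sum_(i=1..k) 2^-i P(Y = m - i) + [m > k] 2^-m,
   which bounds P(Y = m) by a geometric sequence, so that all moments exist.
   Multiplying by m^n and summing over m gives
     E(Y^n) + sum_(m<=k) m^n 2^-m = sum_(i=1..k) 2^-i E((Y + i)^n) + sum_m m^n 2^-m,
   and sum_m m^n 2^-m = 2 b_n by Worpitzky's identity
   m^n = sum_i e_(n,i) C(m + n - i, n) and the negative binomial series.
   For n = 0 this yields E(Y^0) = 1; for n >= 1, expanding (Y + i)^n
   binomially and using sum_(i=1..k) 2^-i = 1 - 2^-k, the terms i^n cancel and
   solving for E(Y^n) gives the recursion. *)

(** * First occurrence of the pattern *)

Lemma big_tupleS (R : Type) (idx : R) (op : Monoid.com_law idx)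
    (T : finType) (m : nat) (F : seq T -> R) :
  \big[op/idx]_(s : m.+1.-tuple T) F s =
  \big[op/idx]_(x : T) \big[op/idx]_(s : m.-tuple T) F (x :: s).
Proof.
rewrite (reindex (fun xs : T * m.-tuple T => [tuple of xs.1 :: xs.2])) /=.
  by rewrite pair_big.
apply: onW_bij; exists (fun s => (thead s, [tuple of behead s])).
  by move=> [x s] /=; rewrite theadE; congr pair; apply: val_inj.
by move=> s; rewrite -tuple_eta.
Qed.

Lemma tuple0_nil (T : Type) (s : 0.-tuple T) : tval s = [::].
Proof. by case: s => [[]]. Qed.

Lemma nseqSr (T : Type) n (x : T) : nseq n.+1 x = rcons (nseq n x) x.
Proof. by rewrite -addn1 nseqD cats1. Qed.

Section FirstOccurrence.
Local Open Scope nat_scope.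
Variable k : nat.

Definition ends_pattern (t : seq bool) := ends_with_pattern k t (size t).

Lemma ends_with_pattern_take s j :
  ends_with_pattern k s j = (j <= size s) && ends_pattern (take j s).
Proof.
rewrite /ends_pattern /ends_with_pattern.
case: (leqP j (size s)) => [le_js | lt_sj]; first by rewrite take_size size_takel.
rewrite take_oversize ?(ltnW lt_sj) //=.
apply/negbTE/negP => /andP[lt_kj /eqP/(congr1 size)].
rewrite size_drop /pattern size_rcons size_nseq; move: (size s) lt_sj => n; lia.
Qed.

Lemma ends_pattern_rcons p b :
  ends_pattern (rcons p b) =
  ~~ b && (k <= size p) && (drop (size p - k) p == nseq k true).
Proof.
rewrite /ends_pattern /ends_with_pattern take_size size_rcons /pattern subSS ltnS.
case: (leqP k (size p)) => [le_kp | _]; last by rewrite andbF.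
by rewrite drop_rcons ?leq_subr // eqseq_rcons; case: b; rewrite /= ?andbT ?andbF.
Qed.

(* [p] ends with a run of exactly [c] heads. *)
Definition trailing_heads (p : seq bool) (c : nat) :=
  forall i, (i <= size p) && (drop (size p - i) p == nseq i true) = (i <= c).

Lemma trailing_heads_nil : trailing_heads [::] 0.
Proof. by case. Qed.

Lemma trailing_heads_rcons_true p c :
  trailing_heads p c -> trailing_heads (rcons p true) c.+1.
Proof.
move=> hp [|i]; first by rewrite subn0 drop_size.
rewrite size_rcons subSS !ltnS nseqSr; have := hp i.
case: (leqP i (size p)) => [le_ip | //] /=.
by rewrite drop_rcons ?leq_subr // eqseq_rcons andbT.
Qed.

Lemma trailing_heads_rcons_false p : trailing_heads (rcons p false) 0.
Proof.
move=> [|i]; first by rewrite subn0 drop_size.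
rewrite size_rcons subSS ltnS nseqSr.
case: (leqP i (size p)) => [le_ip|] //.
by rewrite drop_rcons ?leq_subr // eqseq_rcons andbF.
Qed.

Definition pattern_free (p : seq bool) :=
  forall j, j <= size p -> ~~ ends_pattern (take j p).

Lemma pattern_free_nil : pattern_free [::].
Proof. by move=> j; rewrite leqn0 => /eqP ->. Qed.

Lemma pattern_free_rcons p b :
  pattern_free p -> ~~ ends_pattern (rcons p b) -> pattern_free (rcons p b).
Proof.
move=> free_p not_end j; rewrite size_rcons leq_eqVlt => /orP[/eqP -> | lt_jp].
  by rewrite take_oversize ?size_rcons.
by rewrite -cats1 takel_cat // free_p.
Qed.

Definition first_end (t : seq bool) :=
  ends_pattern t && all (fun j => ~~ ends_pattern (take j t)) (iota 0 (size t)).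

Lemma first_atE m (s : m.-tuple bool) : first_at k s = first_end s.
Proof.
rewrite /first_at /first_end ends_with_pattern_take size_tuple leqnn /=.
rewrite -{1}(size_tuple s) take_size.
congr andb; apply/forallP/allP => [not_end j | not_end j].
  rewrite mem_iota add0n => lt_jm; have := not_end (Ordinal lt_jm).
  by rewrite ends_with_pattern_take size_tuple (ltnW lt_jm).
rewrite ends_with_pattern_take size_tuple (ltnW (ltn_ord j)) /= not_end //.
by rewrite mem_iota add0n ltn_ord.
Qed.

(* The automaton reading [s] after flips ending with exactly [c] heads:
   does the pattern first complete at the last flip of [s]? *)
Fixpoint first_hit (c : nat) (s : seq bool) : bool :=
  match s with
  | [::] => false
  | true :: s' => first_hit c.+1 s'
  | false :: s' => if k <= c then s' == [::] else first_hit 0 s'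
  end.

Lemma first_end_cat s : forall p c, pattern_free p -> trailing_heads p c ->
  first_end (p ++ s) = first_hit c s.
Proof.
elim: s => [|b s IHs] p c free_p heads_p.
  by rewrite cats0 /first_end -{1}(take_size p) (negbTE (free_p _ (leqnn _))).
rewrite -cat_rcons; have := heads_p k; case: b => /= heads_k.
  have not_end : ~~ ends_pattern (rcons p true) by rewrite ends_pattern_rcons.
  exact: IHs (pattern_free_rcons free_p not_end) (trailing_heads_rcons_true heads_p).
have endE : ends_pattern (rcons p false) = (k <= c) by rewrite ends_pattern_rcons.
case: (leqP k c) => [le_kc | lt_ck]; last first.
  have not_end : ~~ ends_pattern (rcons p false) by rewrite endE -ltnNge.
  exact: IHs (pattern_free_rcons free_p not_end) (trailing_heads_rcons_false _).
case: s {IHs} => [|x s].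
  rewrite cats0 /first_end endE le_kc; apply/allP => j.
  rewrite mem_iota size_rcons => /andP[_ lt_jp].
  by rewrite -cats1 takel_cat // free_p.
apply/negbTE; rewrite /first_end negb_and orbC; apply/orP; left.
apply/allPn; exists (size (rcons p false)).
  by rewrite mem_iota size_cat /= size_rcons addnS ltnS leq_addr.
by rewrite take_size_cat // endE le_kc.
Qed.

Lemma first_at_first_hit m (s : m.-tuple bool) : first_at k s = first_hit 0 s.
Proof.
by rewrite first_atE -[tval s]cat0s (first_end_cat _ pattern_free_nil trailing_heads_nil).
Qed.

Definition hit_count (c m : nat) := \sum_(s : m.-tuple bool) (first_hit c s : nat).

Lemma card_first_at m :
  #|[set s : m.-tuple bool | first_at k s]| = hit_count 0 m.
Proof.
rewrite -sum1_card big_mkcond; apply: eq_bigr => s _.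
by rewrite inE first_at_first_hit; case: first_hit.
Qed.

Lemma hit_count0 c : hit_count c 0 = 0.
Proof. by rewrite /hit_count big1 // => s _; rewrite tuple0_nil. Qed.

Lemma hit_countS c m : hit_count c m.+1 =
  hit_count c.+1 m + (if k <= c then (m == 0 : nat) else hit_count 0 m).
Proof.
rewrite /hit_count (big_tupleS _ _ (fun t => (first_hit c t : nat))) big_bool /=.
congr addn.
case: (leqP k c) => _ //; case: m => [|m].
  rewrite (eq_bigr (fun _ => 1)) => [|s _]; last by rewrite tuple0_nil.
  by rewrite sum1_card card_tuple.
by rewrite big1 // => -[[|x s]].
Qed.

Lemma hit_count_done c m : k <= c -> hit_count c m = (0 < m).
Proof.
elim: m c => [|m IHm] c le_kc; first by rewrite hit_count0.
by rewrite hit_countS le_kc IHm ?(leqW le_kc) //; case: m {IHm}.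
Qed.

Lemma hit_count_rec c m : c <= k -> hit_count c m =
  \sum_(1 <= i < (k - c).+1) (if i <= m then hit_count 0 (m - i) else 0) + (k - c < m).
Proof.
elim: m c => [|m IHm] c le_ck.
  rewrite hit_count0 ltn0 addn0 big_nat_cond big1 // => i /andP[/andP[lt0i _] _].
  by rewrite leqn0 eqn0Ngt lt0i.
rewrite hit_countS; case: (leqP k c) => [le_kc | lt_ck].
  have -> : c = k by apply/eqP; rewrite eqn_leq le_ck le_kc.
  by rewrite hit_count_done // subnn big_geq //; case: m {IHm}.
rewrite IHm // (_ : k - c = (k - c.+1).+1); last by lia.
by rewrite [in RHS]big_nat_recl // subn1 /= ltnS addnAC [_ + hit_count 0 m]addnC.
Qed.

End FirstOccurrence.

(** * Finite sums and series of reals *)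

Local Open Scope R_scope.

Lemma RplusA : associative Rplus.
Proof. by move=> x y z; rewrite Rplus_assoc. Qed.

HB.instance Definition _ :=
  Monoid.isComLaw.Build R 0 Rplus RplusA Rplus_comm Rplus_0_l.
HB.instance Definition _ := Monoid.isMulLaw.Build R 0 Rmult Rmult_0_l Rmult_0_r.
HB.instance Definition _ :=
  Monoid.isAddLaw.Build R Rmult Rplus Rmult_plus_distr_r Rmult_plus_distr_l.

Lemma INR_sum (I : Type) (r : seq I) (P : pred I) (F : I -> nat) :
  INR (\sum_(i <- r | P i) F i) = \big[Rplus/0]_(i <- r | P i) INR (F i).
Proof. exact: (big_morph INR plus_INR). Qed.

Lemma INR_expn m n : INR (m ^ n) = INR m ^ n.
Proof. by elim: n => [|n IHn] //=; rewrite expnS mult_INR IHn. Qed.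

Lemma Rle_big (I : eqType) (r : seq I) (P : pred I) (F G : I -> R) :
  (forall i, i \in r -> P i -> F i <= G i) ->
  \big[Rplus/0]_(i <- r | P i) F i <= \big[Rplus/0]_(i <- r | P i) G i.
Proof.
move=> leFG; rewrite big_seq_cond [X in _ <= X]big_seq_cond.
apply: (big_ind2 Rle) => [|x1 x2 y1 y2|i /andP[]].
- exact: Rle_refl.
- exact: Rplus_le_compat.
- exact: leFG.
Qed.

Lemma pow_split x m i : (i <= m)%N -> x ^ m = x ^ (m - i) * x ^ i.
Proof. by move=> le_im; rewrite -pow_add; congr (x ^ _); lia. Qed.

Lemma geom_sum x n :
  (1 - x) * \big[Rplus/0]_(1 <= i < n.+1) x ^ i = x - x ^ n.+1.
Proof.
elim: n => [|n IHn]; first by rewrite big_geq //=; ring.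
by rewrite big_nat_recr //= Rmult_plus_distr_l IHn /=; ring.
Qed.

Lemma sum_inv_pow2 n : \big[Rplus/0]_(1 <= i < n.+1) / 2 ^ i = 1 - (/ 2) ^ n.
Proof.
have := geom_sum (/ 2) n; rewrite (eq_bigr (fun i => / 2 ^ i)) => [|i _].
  by rewrite /=; lra.
by rewrite pow_inv.
Qed.

Lemma is_series_eq (a b : nat -> R) la lb :
  (forall m, a m = b m) -> la = lb -> is_series a la -> is_series b lb.
Proof. by move=> eq_ab <-; apply: is_series_ext. Qed.

Lemma is_series_0 : is_series (fun _ : nat => 0) 0.
Proof.
apply: (filterlim_ext (fun _ => 0)) => [n|]; last exact: filterlim_const.
by symmetry; exact: (sum_n_m_const_zero (G := R_AbelianMonoid) 0 n).
Qed.

Lemma is_series_big (I : eqType) (r : seq I) (P : pred I)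
    (a : I -> nat -> R) (l : I -> R) :
  (forall i, i \in r -> P i -> is_series (a i) (l i)) ->
  is_series (fun m => \big[Rplus/0]_(i <- r | P i) a i m)
            (\big[Rplus/0]_(i <- r | P i) l i).
Proof.
elim: r => [|i r IHr] al.
  by apply: (is_series_eq _ _ is_series_0) => [m|]; rewrite big_nil.
have {}IHr := IHr (fun j rj => al j (mem_behead (s := i :: r) rj)).
have [Pi | nPi] := boolP (P i).
  have ai := al i (mem_head i r) Pi.
  by apply: (is_series_eq _ _ (is_series_plus _ _ _ _ ai IHr)) => [m|]; rewrite big_cons Pi.
by apply: (is_series_eq _ _ IHr) => [m|]; rewrite big_cons (negbTE nPi).
Qed.

Lemma is_series_shift (a : nat -> R) N l :
  is_series (fun m => a (m + N)%N) l ->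
  is_series a (l + \big[Rplus/0]_(0 <= m < N) a m).
Proof.
elim: N a l => [|N IHN] a l sa.
  by apply: (is_series_eq _ _ sa) => [m|]; rewrite ?addn0 // big_geq // Rplus_0_r.
have /(IHN (fun m => a m.+1)) sa1 : is_series (fun m => a (m + N).+1) l.
  by apply: (is_series_eq _ _ sa) => [m|] //; rewrite addnS.
apply: is_series_decr_1; apply: (is_series_eq _ _ sa1) => [m|] //.
rewrite big_nat_recl //= /plus /opp /=; ring.
Qed.

Lemma is_series_shift_zero_prefix (a : nat -> R) N l :
  (forall m, (m < N)%N -> a m = 0) ->
  is_series (fun m => a (m + N)%N) l -> is_series a l.
Proof.
move=> a0 /is_series_shift sa; apply: (is_series_eq _ _ sa) => //.
by rewrite big_nat_cond big1 ?Rplus_0_r // => m /andP[/andP[_ /a0]].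
Qed.

Lemma is_series_finite_support (a : nat -> R) N :
  (forall m, (N <= m)%N -> a m = 0) ->
  is_series a (\big[Rplus/0]_(0 <= m < N) a m).
Proof.
move=> a0; apply: (is_series_eq _ (Rplus_0_l _) (is_series_shift _)) => //.
by apply: (is_series_eq _ _ is_series_0) => // m; rewrite a0 // leq_addl.
Qed.

Lemma sum_f_R0_bin n m :
  sum_f_R0 (fun j => INR 'C(j + n, n)) m = INR 'C(m + n.+1, n.+1).
Proof.
elim: m => [|m IHm] /=; first by rewrite !binn.
by rewrite IHm -plus_INR addSnnS addSn binS.
Qed.

(* The negative binomial series: the induction step is a Cauchy product with
   the geometric series, summed by the hockey-stick identity [sum_f_R0_bin]. *)
Lemma is_series_bin_geom n x : 0 <= x < 1 ->
  is_series (fun m => INR 'C(m + n, n) * x ^ m) (/ (1 - x) ^ n.+1).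
Proof.
move=> [x_ge0 x_lt1].
have sx : is_series (fun m => x ^ m) (/ (1 - x)).
  by apply: is_series_geom; rewrite Rabs_pos_eq.
elim: n => [|n IHn].
  apply: (is_series_eq _ _ sx) => [m|]; first by rewrite addn0 bin0 Rmult_1_l.
  by rewrite /= Rmult_1_r.
have coef_ge0 j : 0 <= INR 'C(j + n, n) * x ^ j.
  exact: Rmult_le_pos (pos_INR _) (pow_le _ _ x_ge0).
apply: (is_series_eq _ _ (is_series_mult_pos _ _ _ _ IHn sx coef_ge0 _)) => [m||j].
- rewrite (PartSum.sum_eq _ (fun j => INR 'C(j + n, n) * x ^ m)) => [|j /leP le_jm].
    by rewrite -scal_sum sum_f_R0_bin Rmult_comm.
  by rewrite Rmult_assoc -pow_add; congr (_ * x ^ _); lia.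
- by rewrite -Rinv_mult Rmult_comm.
- exact: pow_le.
Qed.

Lemma is_series_bin_half n :
  is_series (fun m => INR 'C(m + n, n) / 2 ^ m) (2 ^ n.+1).
Proof.
apply: (is_series_eq _ _ (@is_series_bin_geom n (/ 2) _)) => [m||].
- by rewrite pow_inv.
- by rewrite (_ : 1 - / 2 = / 2) ?pow_inv ?Rinv_inv //; lra.
- lra.
Qed.

Lemma expn_le_ffact m n : (m ^ n <= (m + n) ^_ n)%N.
Proof.
elim: n => [|n IHn]; first by rewrite ffactn0.
by rewrite addnS ffactSS expnS leq_mul // leqW ?leq_addr.
Qed.

Lemma ex_series_pow_geom n x : 0 <= x < 1 ->
  ex_series (fun m => INR m ^ n * x ^ m).
Proof.
move=> hx; have [x_ge0 _] := hx.
apply: (ex_series_le _ (fun m => INR n`! * (INR 'C(m + n, n) * x ^ m))).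
  move=> m; have xm_ge0 := pow_le _ m x_ge0.
  rewrite /norm /= /abs /= Rabs_pos_eq; last exact: Rmult_le_pos (pow_le _ _ (pos_INR _)) _.
  rewrite -Rmult_assoc; apply: Rmult_le_compat_r => //.
  rewrite -INR_expn -mult_INR; apply/le_INR/leP.
  by rewrite multE mulnC bin_ffact expn_le_ffact.
by eexists; apply: is_series_scal_l; exact: is_series_bin_geom.
Qed.

Section Worpitzky.
Local Open Scope nat_scope.

Lemma eulerian_small n i : n < i -> eulerian n i = 0.
Proof. by elim: n i => [|n IHn] [|i] //= lt_ni; rewrite !IHn ?muln0 //; lia. Qed.

Lemma worpitzky_bin_step m n i : i <= n ->
  i * 'C(m + n.+1 - i, n.+1) + (n - i + 1) * 'C(m + n - i, n.+1) =
  m * 'C(m + n - i, n).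
Proof.
move=> le_in; rewrite (_ : m + n.+1 - i = (m + n - i).+1); last by lia.
rewrite binS mulnDr addnAC -mulnDl (_ : i + (n - i + 1) = n.+1); last by lia.
rewrite mul_bin_left -mulnDl.
case: (leqP i m) => [le_im | lt_mi]; first by congr (_ * _); lia.
by rewrite bin_small ?muln0 //; lia.
Qed.

Lemma worpitzky n m :
  m ^ n = \sum_(0 <= i < n.+1) eulerian n i * 'C(m + n - i, n).
Proof.
elim: n => [|n IHn]; first by rewrite big_nat1 addn0 bin0.
rewrite expnS IHn big_distrr [in RHS]big_nat_recl //= mul0n add0n.
set F := fun i => i * eulerian n i * 'C(m + n.+1 - i, n.+1).
have shiftF : \sum_(0 <= i < n.+1) F i.+1 = \sum_(0 <= i < n.+1) F i.
  transitivity (\sum_(0 <= i < n.+2) F i).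
    by rewrite [in RHS]big_nat_recl // {2}/F !mul0n add0n.
  by rewrite big_nat_recr //= {2}/F eulerian_small // muln0 mul0n addn0.
transitivity (\sum_(0 <= i < n.+1)
    (F i.+1 + (n - i + 1) * eulerian n i * 'C(m + n - i, n.+1))); last first.
  apply: eq_bigr => i _; rewrite /F [RHS]mulnDl.
  by rewrite (_ : m + n.+1 - i.+1 = m + n - i) //; lia.
rewrite big_split /= shiftF -big_split /= big_nat_cond [in RHS]big_nat_cond.
apply: eq_bigr => i /andP[/andP[_]]; rewrite ltnS => le_in _.
rewrite /F mulnCA -(worpitzky_bin_step m le_in) mulnDr.
by rewrite !mulnA ![eulerian n i * _]mulnC.
Qed.

End Worpitzky.

Lemma is_series_pow_half n :
  is_series (fun m => INR m ^ n / 2 ^ m) (2 * INR (fubini n)).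
Proof.
have termE m : INR m ^ n / 2 ^ m =
    \big[Rplus/0]_(0 <= i < n.+1) (INR (eulerian n i) * (INR 'C(m + n - i, n) / 2 ^ m)).
  rewrite -INR_expn worpitzky INR_sum /Rdiv big_distrl /=.
  by apply: eq_bigr => i _; rewrite mult_INR Rmult_assoc.
have bin_shift i : (i <= n)%N ->
    is_series (fun m => INR 'C(m + n - i, n) / 2 ^ m) (2 ^ n.+1 / 2 ^ i).
  move=> le_in; apply: (is_series_shift_zero_prefix (N := i)) => [m lt_mi|].
    by rewrite bin_small; [exact: Rmult_0_l | lia].
  have := is_series_scal_r (/ 2 ^ i) _ _ (@is_series_bin_half n).
  apply: is_series_eq => [m|] //.
  rewrite (_ : m + i + n - i = m + n)%N; last by lia.
  by rewrite /Rdiv Rmult_assoc -Rinv_mult -pow_add.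
apply: (is_series_eq (fun m => esym (termE m)) _
         (is_series_big (l := fun i => INR (eulerian n i) * (2 ^ n.+1 / 2 ^ i)) _)) => [|i].
  rewrite /fubini INR_sum big_distrr /=; apply: eq_big_nat => i /andP[_].
  rewrite ltnS => le_in.
  have two : INR 2 = 2 by rewrite /=; lra.
  rewrite mult_INR INR_expn two (pow_split 2 le_in).
  by field; apply: pow_nonzero; lra.
rewrite mem_index_iota ltnS => /andP[_ le_in] _.
exact: is_series_scal_l _ _ _ (bin_shift i le_in).
Qed.

(** * Moments of the waiting time *)

Lemma sum_pow_lt1 k :
  exists2 x, / 2 < x < 1 & \big[Rplus/0]_(1 <= i < k.+1) x ^ i < 1.
Proof.
set eps := (/ 2) ^ k.+1.
have eps_gt0 : 0 < eps by apply: pow_lt; lra.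
have [_ eps_lt1] : 0 <= eps < 1 by apply: pow_lt_1_compat => //; [lra | lia].
set x := / 2 + eps / 4.
have [x_gt x_lt1] : / 2 < x < 1 by rewrite /x; lra.
exists x => //; apply: (Rmult_lt_reg_l (1 - x)); first lra.
(* [(1 - x) (x + ... + x^k) = x - x^(k+1)] and [2 x - 1 = eps / 2 < x^(k+1)]. *)
have : eps <= x ^ k.+1 by apply: pow_incr; lra.
rewrite geom_sum /x; lra.
Qed.

(* [C th^m] is a supersolution of the recursion for [th = 1 / (2 x)] and
   [C = 1 / (1 - x - ... - x^k)], with [x] given by [sum_pow_lt1]. *)
Lemma renewal_geometric_bound k (u : nat -> R) :
  (forall m, u m <= \big[Rplus/0]_(1 <= i < k.+1)
                      (if (i <= m)%N then u (m - i)%N / 2 ^ i else 0) + / 2 ^ m) ->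
  exists2 th, 0 < th < 1 & exists C, forall m, u m <= C * th ^ m.
Proof.
move=> u_rec; have [x [x_gt x_lt1] S_lt1] := sum_pow_lt1 k.
set S := \big[Rplus/0]_(1 <= i < k.+1) x ^ i in S_lt1.
set th := / (2 * x); set C := / (1 - S).
have th_x : th * x = / 2 by rewrite /th; field; lra.
have th_gt0 : 0 < th by apply: Rinv_0_lt_compat; lra.
have C_gt0 : 0 < C by apply: Rinv_0_lt_compat; lra.
exists th; first by split=> //; rewrite /th -Rinv_1; apply: Rinv_lt_contravar; lra.
exists C; elim/ltn_ind=> m IHm.
have thm_gt0 : 0 < th ^ m by exact: pow_lt.
have term_le i : (0 < i)%N ->
    (if (i <= m)%N then u (m - i)%N / 2 ^ i else 0) <= C * th ^ m * x ^ i.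
  move=> i_gt0; have xi_gt0 : 0 < x ^ i by apply: pow_lt; lra.
  case: ifP => [le_im | _]; last first.
    by apply/Rlt_le/Rmult_lt_0_compat => //; apply: Rmult_lt_0_compat.
  rewrite (pow_split th le_im) -!Rmult_assoc Rmult_assoc -Rpow_mult_distr th_x pow_inv.
  apply: Rmult_le_compat_r; first by apply/Rlt_le/Rinv_0_lt_compat/pow_lt; lra.
  apply: IHm; lia.
have tail_le : / 2 ^ m <= th ^ m.
  rewrite -pow_inv -th_x Rpow_mult_distr -{2}(Rmult_1_r (th ^ m)).
  apply: Rmult_le_compat_l; first lra.
  by rewrite -(pow1 m); apply: pow_incr; lra.
have sum_le : \big[Rplus/0]_(1 <= i < k.+1) (if (i <= m)%N then u (m - i)%N / 2 ^ i else 0)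
    <= \big[Rplus/0]_(1 <= i < k.+1) (C * th ^ m * x ^ i).
  by apply: Rle_big => i; rewrite mem_index_iota => /andP[i_gt0 _] _; exact: term_le.
apply: Rle_trans (u_rec m) (Rle_trans _ _ _ (Rplus_le_compat _ _ _ _ sum_le tail_le) _).
rewrite -big_distrr /= -/S.
have : C * (1 - S) = 1 by rewrite /C; field; lra.
nra.
Qed.

Section TimeToPattern.
Variable k : nat.

Lemma probYE m : probY k m = INR (hit_count k 0 m) / 2 ^ m.
Proof. by rewrite /probY card_first_at. Qed.

Lemma probY_ge0 m : 0 <= probY k m.
Proof.
rewrite probYE; apply: Rmult_le_pos (pos_INR _) _.
by apply/Rlt_le/Rinv_0_lt_compat/pow_lt; lra.
Qed.

Lemma probY_rec m : probY k m =
  \big[Rplus/0]_(1 <= i < k.+1) (if (i <= m)%N then probY k (m - i) / 2 ^ i else 0)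
  + (if (k < m)%N then / 2 ^ m else 0).
Proof.
rewrite probYE hit_count_rec // subn0 plus_INR INR_sum /Rdiv Rmult_plus_distr_r.
rewrite big_distrl /=; congr Rplus; last by case: (k < m)%N => /=; ring.
apply: eq_bigr => i _; case: ifP => [le_im | _]; last exact: Rmult_0_l.
by rewrite probYE (pow_split 2 le_im) Rinv_mult /Rdiv Rmult_assoc.
Qed.

Lemma probY_geometric_bound :
  exists2 th, 0 < th < 1 & exists C, forall m, probY k m <= C * th ^ m.
Proof.
apply: renewal_geometric_bound => m; rewrite {1}probY_rec.
apply: Rplus_le_compat_l; case: ifP => _; first exact: Rle_refl.
by apply/Rlt_le/Rinv_0_lt_compat/pow_lt; lra.
Qed.

Lemma ex_series_moment n : ex_series (fun m => INR m ^ n * probY k m).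
Proof.
have [th [th_gt0 th_lt1] [C probY_le]] := probY_geometric_bound.
apply: (ex_series_le _ (fun m => C * (INR m ^ n * th ^ m))).
  move=> m; have mn_ge0 := pow_le _ n (pos_INR m).
  rewrite /norm /= /abs /= Rabs_pos_eq; last exact: Rmult_le_pos (probY_ge0 m).
  by apply: Rle_trans (Rmult_le_compat_l _ _ _ mn_ge0 (probY_le m)) _; right; ring.
apply: ex_series_scal_l; apply: ex_series_pow_geom; lra.
Qed.

Lemma is_series_moment n :
  is_series (fun m => INR m ^ n * probY k m) (momentY k n).
Proof. exact: Series_correct (ex_series_moment n). Qed.

(* [E((Y + i)^n)], expanded binomially. *)
Definition shifted_moment (i n : nat) :=
  \big[Rplus/0]_(0 <= j < n.+1) (INR 'C(n, j) * INR i ^ (n - j) * momentY k j).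

Lemma is_series_shifted_moment i n :
  is_series (fun m => if (i <= m)%N then INR m ^ n * probY k (m - i) else 0)
            (shifted_moment i n).
Proof.
apply: (is_series_shift_zero_prefix (N := i)) => [m lt_mi|]; first by rewrite leqNgt lt_mi.
have sj j : is_series (fun m => INR 'C(n, j) * INR i ^ (n - j) * (INR m ^ j * probY k m))
                      (INR 'C(n, j) * INR i ^ (n - j) * momentY k j).
  exact: is_series_scal_l _ _ _ (@is_series_moment j).
apply: (is_series_eq _ _ (is_series_big (fun j _ _ => sj j))) => // m.
rewrite leq_addl addnK -INR_expn addnC expnDn INR_sum big_mkord big_distrl /=.
by apply: eq_bigr => j _; rewrite !mult_INR !INR_expn; ring.
Qed.

Lemma moment_renewal n :
  momentY k n + \big[Rplus/0]_(0 <= m < k.+1) (INR m ^ n / 2 ^ m) =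
  \big[Rplus/0]_(1 <= i < k.+1) (shifted_moment i n / 2 ^ i) + 2 * INR (fubini n).
Proof.
set head := fun m => if (m < k.+1)%N then INR m ^ n / 2 ^ m else 0.
have shead : is_series head (\big[Rplus/0]_(0 <= m < k.+1) (INR m ^ n / 2 ^ m)).
  apply: (is_series_eq _ _ (is_series_finite_support (N := k.+1) _)) => [m||m] //.
    by apply: eq_big_nat => m /andP[_ lt_mk]; rewrite /head lt_mk.
  by move=> le_km; rewrite /head ltnNge le_km.
have sa : is_series (fun m => INR m ^ n * probY k m + head m)
    (momentY k n + \big[Rplus/0]_(0 <= m < k.+1) (INR m ^ n / 2 ^ m)).
  exact: is_series_plus _ _ _ _ (@is_series_moment n) shead.
have sshift i : is_series
    (fun m => (if (i <= m)%N then INR m ^ n * probY k (m - i) else 0) * / 2 ^ i)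
    (shifted_moment i n / 2 ^ i).
  exact: is_series_scal_r _ _ _ (@is_series_shifted_moment i n).
have sb : is_series (fun m => \big[Rplus/0]_(1 <= i < k.+1)
      ((if (i <= m)%N then INR m ^ n * probY k (m - i) else 0) * / 2 ^ i)
      + INR m ^ n / 2 ^ m)
    (\big[Rplus/0]_(1 <= i < k.+1) (shifted_moment i n / 2 ^ i) + 2 * INR (fubini n)).
  exact: is_series_plus _ _ _ _ (is_series_big (fun i _ _ => sshift i))
                              (@is_series_pow_half n).
rewrite -(is_series_unique _ _ sa) -(is_series_unique _ _ sb).
apply: Series_ext => m.
rewrite /plus /= {1}probY_rec Rmult_plus_distr_l big_distrr /= /head ltnS Rplus_assoc.
congr Rplus; first by apply: eq_bigr => i _; case: ifP => _; rewrite /Rdiv; ring.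
by case: (leqP m k) => _; rewrite /Rdiv; ring.
Qed.

Lemma momentY0 : momentY k 0 = 1.
Proof.
have fubini0 : INR (fubini 0) = 1 by rewrite /fubini big_nat1.
have head0 : \big[Rplus/0]_(1 <= i < k.+1) (INR i ^ 0 / 2 ^ i) = 1 - (/ 2) ^ k.
  by rewrite -sum_inv_pow2; apply: eq_bigr => i _; rewrite /= /Rdiv Rmult_1_l.
have shifted0 : \big[Rplus/0]_(1 <= i < k.+1) (shifted_moment i 0 / 2 ^ i) =
                momentY k 0 * (1 - (/ 2) ^ k).
  rewrite -sum_inv_pow2 big_distrr; apply: eq_bigr => i _.
  by rewrite /shifted_moment big_nat1 /= /Rdiv; ring.
have := moment_renewal 0; rewrite big_ltn // head0 shifted0 fubini0 /= /Rdiv Rinv_1.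
have : 0 < (/ 2) ^ k by apply: pow_lt; lra.
nra.
Qed.

Definition cross_moment (i n : nat) :=
  \big[Rplus/0]_(1 <= j < n) (INR 'C(n, j) * INR i ^ (n - j) * momentY k j).

Lemma shifted_momentE i n : (1 <= n)%N ->
  shifted_moment i n = INR i ^ n + cross_moment i n + momentY k n.
Proof.
move=> n_gt0; rewrite /shifted_moment big_ltn // big_nat_recr //=.
by rewrite bin0 binn subn0 subnn momentY0 /cross_moment /=; ring.
Qed.

Lemma sum_cross_moment n :
  2 ^ k * \big[Rplus/0]_(1 <= i < k.+1) (cross_moment i n / 2 ^ i) =
  \big[Rplus/0]_(1 <= j < n) (INR 'C(n, j) * momentY k j *
     \big[Rplus/0]_(1 <= i < k.+1) (INR i ^ (n - j) * 2 ^ (k - i))).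
Proof.
under [RHS]eq_bigr => j _ do rewrite big_distrr /=.
rewrite big_distrr /= exchange_big; apply: eq_big_nat => i /andP[_].
rewrite ltnS => le_ik; rewrite /cross_moment /Rdiv big_distrl big_distrr /=.
apply: eq_bigr => j _; rewrite (pow_split 2 le_ik).
by field; apply: pow_nonzero; lra.
Qed.

Lemma moment_recursion n : (1 <= n)%N ->
  momentY k n = 2 ^ (k + 1) * INR (fubini n) +
    \big[Rplus/0]_(1 <= j < n) (INR 'C(n, j) * momentY k j *
       \big[Rplus/0]_(1 <= i < k.+1) (INR i ^ (n - j) * 2 ^ (k - i))).
Proof.
move=> n_gt0; rewrite -sum_cross_moment.
set X := \big[Rplus/0]_(1 <= i < k.+1) (cross_moment i n / 2 ^ i).
have head_sum : \big[Rplus/0]_(0 <= m < k.+1) (INR m ^ n / 2 ^ m) =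
                \big[Rplus/0]_(1 <= i < k.+1) (INR i ^ n / 2 ^ i).
  by rewrite big_ltn //= pow_i; [rewrite /Rdiv Rmult_0_l Rplus_0_l | apply/ltP].
have shifted_sum : \big[Rplus/0]_(1 <= i < k.+1) (shifted_moment i n / 2 ^ i) =
    \big[Rplus/0]_(1 <= i < k.+1) (INR i ^ n / 2 ^ i) + X + momentY k n * (1 - (/ 2) ^ k).
  rewrite -sum_inv_pow2 big_distrr -!big_split; apply: eq_bigr => i _.
  by rewrite shifted_momentE //= /Rdiv; ring.
have := moment_renewal n; rewrite head_sum shifted_sum => renewal.
have solved : momentY k n * (/ 2) ^ k = X + 2 * INR (fubini n) by lra.
have cancel : (/ 2) ^ k * 2 ^ k = 1 by rewrite pow_inv; field; apply: pow_nonzero; lra.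
by rewrite -[LHS]Rmult_1_r -cancel -Rmult_assoc solved pow_add; ring.
Qed.

End TimeToPattern.

Theorem corollary3p6 (k n : nat) (hk : (1 <= k)%N) (hn : (1 <= n)%N) :
  ex_series (fun m : nat => Rmult (pow (INR m) n) (probY k m)) /\
  momentY k n =
    Rplus (Rmult (pow 2 (k + 1)) (INR (fubini n)))
      (\big[Rplus/R0]_(1 <= j < n)
         Rmult (Rmult (INR 'C(n, j)) (momentY k j))
               (\big[Rplus/R0]_(1 <= i < k.+1)
                   Rmult (pow (INR i) (n - j)) (pow 2 (k - i)))).
Proof. by split; [exact: ex_series_moment | exact: moment_recursion]. Qed.
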